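(* Let $\alpha=(\alpha_1,\dots,\alpha_k)\in\mathbb N^k$ with $k\ge1$ and $\alpha_k>0$, and let $\beta=(\beta_1,\dots,\beta_k)\in\mathbb N^k$. Then $$\widehat M_{\binom{\alpha}{\beta}}=\sum_{I=(i_1,\dots,i_k)}c_{\beta,I}\,M_{(0^{i_1},\alpha_1,0^{i_2},\alpha_2,\dots,0^{i_k},\alpha_k)},$$ where the sum is over all $I$ with $0\le i_j\le\beta_j+\beta_{j+1}+\dots+\beta_k$ for $j=1,\dots,k$.
   Context: $\mathbb P$ and $\mathbb N$ denote positive and nonnegative integers, and $[n]=\{1,\dots,n\}$. Let $X=\{x_i:i\in\mathbb P\}$ be commuting indeterminates. $0^i$ denotes $i$ consecutive zeros. For a sequence $\gamma\in\mathbb N^m$ with $\gamma_m>0$, $M_\gamma=\sum_{0<i_1<\cdots<i_m}x_{i_1}^{\gamma_1}\cdots x_{i_m}^{\gamma_m}$. Also $$\widehat M_{\binom{\alpha}{\beta}}=\sum_{0<i_1<\cdots<i_k}i_1^{\beta_1}\cdots i_k^{\beta_k}x_{i_1}^{\alpha_1}\cdots x_{i_k}^{\alpha_k}.$$ $c_{\beta,I}$ is defined as follows. Put $b_j=\beta_1+\dots+\beta_j$ and $N_j=(i_1+1)+\dots+(i_j+1)$. Then $c_{\beta,I}$ is the number of maps $f:[b_k]\to[N_k]$ with $f([b_j])\subseteq[N_j]$ for all $j$ and $f([b_k])\cup\{N_1,\dots,N_k\}=[N_k]$. If $b_k=0$, the empty map is the only map. *)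

From HB Require Import structures.
From mathcomp Require Import all_boot all_order all_algebra.
From mathcomp Require Import mpoly.
Set Implicit Arguments. Unset Strict Implicit. Unset Printing Implicit Defensive.
Import Order.TTheory GRing.Theory Num.Theory.
Local Open Scope ring_scope.

(* Truncation to the variables x_1..x_n (x_{i+1} is 'X_i, i : 'I_n)
   of the monomial quasisymmetric function
   M_g = sum_{0<i_1<...<i_m} x_{i_1}^{g_1} ... x_{i_m}^{g_m}, m = size g. *)
Definition Mq (n : nat) (g : seq nat) : {mpoly int[n]} :=
  \sum_(t : (size g).-tuple 'I_n | sorted (fun a b : 'I_n => (val a < val b)%N) t)
     \prod_(j < size g) 'X_(tnth t j) ^+ nth 0%N g j.

(* Truncation to x_1..x_n of
   Mhat_{(alpha;beta)} = sum_{0<i_1<...<i_k} i_1^{b_1}..i_k^{b_k} x_{i_1}^{a_1}..x_{i_k}^{a_k},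
   here with k.+1 parts indexed by 'I_k.+1. *)
Definition Mhat (n k : nat) (alpha beta : 'I_k.+1 -> nat) : {mpoly int[n]} :=
  \sum_(t : k.+1.-tuple 'I_n | sorted (fun a b : 'I_n => (val a < val b)%N) t)
     \prod_(j < k.+1)
        (((val (tnth t j)).+1 ^ beta j)%N%:R * 'X_(tnth t j) ^+ alpha j).

Definition compos (k : nat) (alpha I : 'I_k.+1 -> nat) : seq nat :=
  flatten [seq rcons (nseq (I j) 0%N) (alpha j) | j <- enum 'I_k.+1].

(* b_j and N_j (0-based index j : 'I_k.+1 stands for the paper's j+1). *)
Definition bpart (k : nat) (beta : 'I_k.+1 -> nat) (j : 'I_k.+1) : nat :=
  (\sum_(l : 'I_k.+1 | (val l <= val j)%N) beta l)%N.
Definition Npart (k : nat) (I : 'I_k.+1 -> nat) (j : 'I_k.+1) : nat :=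
  (\sum_(l : 'I_k.+1 | (val l <= val j)%N) (I l).+1)%N.

(* c_{beta,I}: number of maps f : [b_k] -> [N_k] with f([b_j]) in [N_j] for all j
   and f([b_k]) U {N_1,...,N_k} = [N_k].  Elements x of [b_k] are encoded 0-based
   as x : 'I_(b_k) (value x+1), similarly for [N_k]. *)
Definition cbI (k : nat) (beta I : 'I_k.+1 -> nat) : nat :=
  #|[set f : {ffun 'I_(bpart beta ord_max) -> 'I_(Npart I ord_max)} |
      [forall x, forall j : 'I_k.+1,
         ((val x < bpart beta j)%N ==> (val (f x) < Npart I j)%N)] &&
      [forall y : 'I_(Npart I ord_max),
         [exists x, f x == y] || [exists j : 'I_k.+1, (val y).+1 == Npart I j]]]|.

Definition bsuffix (k : nat) (beta : 'I_k.+1 -> nat) (j : 'I_k.+1) : nat :=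
  (\sum_(l : 'I_k.+1 | (val j <= val l)%N) beta l)%N.
Definition btotal (k : nat) (beta : 'I_k.+1 -> nat) : nat :=
  (\sum_(l : 'I_k.+1) beta l)%N.

(* For increasing t_1 < ... < t_k in [n], the maps f : [b_k] -> [n] with
   f([b_j]) in [t_j] for all j number t_1^{beta_1} ... t_k^{beta_k}, so the left
   side is a sum over pairs (f, t).  On the right, c_{beta,I} M_{...} is a sum
   over pairs (f, s): s is an increasing sequence indexing a monomial of
   M_{(0^{i_1},alpha_1,...,0^{i_k},alpha_k)} and f = s o g for a map g counted by
   c_{beta,I}.  For fixed f, sending (I, s) to the entries of s that carry the
   alpha_j is a bijection onto the admissible t: s is recovered as the increasing
   enumeration of f([b_k]) U {t_1, ..., t_k}, and i_j as the number of its
   entries strictly between t_{j-1} and t_j.  Those entries are values of f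
   outside [b_{j-1}], whence i_j <= beta_j + ... + beta_k. *)

From HB Require Import structures.
From mathcomp Require Import all_boot all_order all_algebra.
From mathcomp Require Import mpoly.
Set Implicit Arguments. Unset Strict Implicit. Unset Printing Implicit Defensive.
Import Order.TTheory GRing.Theory Num.Theory.

Section PrefixSums.
Variable k : nat.
Implicit Types (F : 'I_k.+1 -> nat) (j : 'I_k.+1).

Definition psum F m := \sum_(i < m) F (inord i).

Lemma psum0 F : psum F 0 = 0.
Proof. exact: big_ord0. Qed.

Lemma psumS F m : psum F m.+1 = psum F m + F (inord m).
Proof. exact: big_ord_recr. Qed.

Lemma leq_psum F : {homo psum F : m1 m2 / m1 <= m2}.
Proof.
move=> m1 m2 /subnK <-; elim: (m2 - m1) => [|d IHd]; first by [].
by rewrite addSn psumS (leq_trans IHd) ?leq_addr.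
Qed.

Lemma sum_ord_ltn F m : m <= k.+1 -> \sum_(l : 'I_k.+1 | l < m) F l = psum F m.
Proof.
move=> le_m; rewrite /psum (big_ord_widen k.+1 (fun i => F (inord i)) le_m).
by apply: eq_bigr => l _; rewrite inord_val.
Qed.

Lemma sum_ord_leq F j : \sum_(l : 'I_k.+1 | l <= j) F l = psum F j.+1.
Proof. exact: (sum_ord_ltn F (ltn_ord j)). Qed.

Lemma sum_ord_psum F : \sum_(l : 'I_k.+1) F l = psum F k.+1.
Proof. by rewrite -sum_ord_ltn //; apply: eq_bigl => l; rewrite ltn_ord. Qed.

Lemma big_nat_psum (R : Type) (idx : R) (op : Monoid.law idx) F m (G : nat -> R) :
  \big[op/idx]_(0 <= x < psum F m) G x =
  \big[op/idx]_(j < m) \big[op/idx]_(psum F j <= x < psum F j.+1) G x.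
Proof.
elim: m => [|m IHm]; first by rewrite psum0 big_ord0 big_geq.
by rewrite big_ord_recr -IHm -big_cat_nat ?leq_psum.
Qed.

End PrefixSums.

Lemma bpartE k (beta : 'I_k.+1 -> nat) j : bpart beta j = psum beta j.+1.
Proof. exact: sum_ord_leq. Qed.

Lemma bsuffixE k (beta : 'I_k.+1 -> nat) j :
  bsuffix beta j = psum beta k.+1 - psum beta j.
Proof.
rewrite -sum_ord_psum (bigID (fun l : 'I_k.+1 => l < j)) /= sum_ord_ltn 1?ltnW //.
by rewrite addKn; apply: eq_bigl => l; rewrite -leqNgt.
Qed.

Lemma bsuffix_le_btotal k (beta : 'I_k.+1 -> nat) j : bsuffix beta j <= btotal beta.
Proof. by rewrite bsuffixE /btotal sum_ord_psum leq_subr. Qed.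

Section Compositions.
Variable k : nat.
Local Notation K := k.+1.
Implicit Types (I Q : 'I_K -> nat) (i j : 'I_K).

(* The 0-based position N_j - 1 of alpha_j in [compos alpha I]. *)
Definition apos I j := psum (fun l => (I l).+1) j + I j.

Lemma aposS I j : (apos I j).+1 = psum (fun l => (I l).+1) j.+1.
Proof. by rewrite psumS inord_val addnS. Qed.

Lemma Npart_apos I j : Npart I j = (apos I j).+1.
Proof. by rewrite aposS; apply: sum_ord_leq. Qed.

Lemma eq_apos I1 I2 : I1 =1 I2 -> apos I1 =1 apos I2.
Proof.
by move=> eI j; rewrite /apos /psum eI; congr (_ + _); apply: eq_bigr => l _; rewrite eI.
Qed.

Lemma apos_ltn I : {homo apos I : i j / i < j}.
Proof.
move=> i j lt_ij; apply: leq_trans (leq_addr (I j) (psum (fun l => (I l).+1) j)).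
by rewrite aposS leq_psum.
Qed.

Lemma leq_apos I i j : (apos I i <= apos I j) = (i <= j).
Proof.
case: (ltngtP i j) => [lt_ij|lt_ji|/val_inj->]; last by rewrite !leqnn.
  by rewrite ltnW ?apos_ltn.
by apply/negbTE; rewrite -ltnNge apos_ltn.
Qed.

Lemma apos_inj I : injective (apos I).
Proof.
by move=> i j eq_ij; apply/val_inj/eqP; rewrite eqn_leq -!(leq_apos I) eq_ij leqnn.
Qed.

Lemma leq_apos_max I j : apos I j <= apos I ord_max.
Proof. by rewrite leq_apos -ltnS. Qed.

Lemma leq_psum_apos I j l : (psum (fun i => (I i).+1) j <= apos I l) = (j <= l).
Proof.
case: (leqP j l) => [le_jl|lt_lj].
  exact: leq_trans (leq_psum _ le_jl) (leq_addr (I l) _).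
by apply/negbTE; rewrite -ltnNge aposS leq_psum.
Qed.

Definition gaps Q j := Q j - (if nat_of_ord j is j'.+1 then (Q (inord j')).+1 else 0).

Lemma gapsK I : gaps (apos I) =1 I.
Proof.
case=> [[|j] lt_j]; rewrite /gaps /=.
  by rewrite subn0 /apos /psum big_ord0.
by rewrite aposS inordK 1?ltnW // /apos addKn.
Qed.

Lemma eq_from_apos I1 I2 : apos I1 =1 apos I2 -> I1 =1 I2.
Proof.
move=> eq_apos j; rewrite -gapsK -[RHS]gapsK /gaps.
by case: (nat_of_ord j) => [|i]; rewrite !eq_apos.
Qed.

Lemma apos_gaps Q : {homo Q : i j / i < j} -> apos (gaps Q) =1 Q.
Proof.
move=> Q_ltn j; apply/succn_inj; rewrite aposS -[in RHS](inord_val j).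
elim: {j}(val j) (ltn_ord j) => [|m IHm] lt_m.
  by rewrite psumS psum0 /gaps inordK // subn0.
rewrite psumS IHm 1?ltnW // /gaps inordK //= addnS subnKC //.
by apply: Q_ltn; rewrite !inordK // ltnW.
Qed.

Lemma sumn_take_enum (F : 'I_K -> nat) m : m <= K ->
  sumn (take m [seq F l | l <- enum 'I_K]) = psum F m.
Proof.
move=> le_m.
have -> : [seq F l | l <- enum 'I_K] = [seq F (inord i) | i : nat <- iota 0 K].
  by rewrite -val_enum_ord -map_comp; apply: eq_map => i /=; rewrite inord_val.
rewrite -map_take take_iota (minn_idPl le_m) sumnE big_map.
by rewrite -{1}(subn0 m) -/(index_iota 0 m) big_mkord.
Qed.

Variable alpha : 'I_K -> nat.

Definition blocks I := [seq rcons (nseq (I j) 0) (alpha j) | j <- enum 'I_K].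

Lemma shape_blocks I : shape (blocks I) = [seq (I j).+1 | j <- enum 'I_K].
Proof.
by rewrite /shape -map_comp; apply: eq_map => j /=; rewrite size_rcons size_nseq.
Qed.

Lemma apos_flatten_index I j :
  apos I j = flatten_index (shape (blocks I)) j (I j).
Proof. by rewrite shape_blocks /flatten_index sumn_take_enum 1?ltnW. Qed.

Lemma size_compos I : size (compos alpha I) = (apos I ord_max).+1.
Proof.
rewrite size_flatten shape_blocks aposS -sumn_take_enum //.
by rewrite take_oversize // size_map size_enum_ord.
Qed.

Lemma nth_blocks I j : nth [::] (blocks I) j = rcons (nseq (I j) 0) (alpha j).
Proof. by rewrite (nth_map j) ?size_enum_ord // nth_ord_enum. Qed.

Lemma nth_compos_apos I j : nth 0 (compos alpha I) (apos I j) = alpha j.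
Proof.
have lt_I : I j < nth 0 (shape (blocks I)) j.
  by rewrite shape_blocks (nth_map j) ?size_enum_ord // nth_ord_enum.
rewrite [compos _ _]/(flatten (blocks I)) nth_flatten apos_flatten_index.
rewrite flatten_indexKl // flatten_indexKr //.
by rewrite nth_blocks nth_rcons size_nseq ltnn eqxx.
Qed.

Lemma nth_compos_gap I p : p < size (compos alpha I) ->
  (forall j, p != apos I j) -> nth 0 (compos alpha I) p = 0.
Proof.
rewrite [compos _ _]/(flatten (blocks I)) size_flatten nth_flatten => lt_p notin.
move: (reshape_indexP lt_p) (reshape_offsetP lt_p) (reshape_indexK (shape (blocks I)) p).
rewrite shape_blocks size_map size_enum_ord.
set r := reshape_index _ _; set o := reshape_offset _ _ => lt_r.
rewrite -[r]/(val (Ordinal lt_r)) (nth_map (Ordinal lt_r)) ?size_enum_ord //.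
rewrite nth_ord_enum nth_blocks nth_rcons size_nseq => lt_o def_p.
case: ltnP => [lt_oI|le_Io]; first by rewrite nth_nseq lt_oI.
have eq_o : o = I (Ordinal lt_r) by apply/anti_leq; rewrite le_Io -ltnS lt_o.
by case/eqP: (notin (Ordinal lt_r)); rewrite -def_p apos_flatten_index shape_blocks -eq_o.
Qed.

End Compositions.

Section StrictlySorted.
Variable n : nat.
Local Notation ltI := (fun a b : 'I_n => val a < val b).
Implicit Types (s : seq 'I_n) (x y z : 'I_n).

Lemma ltn_val_trans : transitive ltI.
Proof. by move=> y x z /ltn_trans; apply. Qed.

Lemma ltn_val_irr : irreflexive ltI.
Proof. by move=> x; rewrite /= ltnn. Qed.

Lemma sorted_ord_uniq s : sorted ltI s -> uniq s.
Proof. exact: sorted_uniq ltn_val_trans ltn_val_irr s. Qed.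

Lemma ltn_nth_sorted_ord x0 s i j : sorted ltI s -> i < size s -> j < size s ->
  (val (nth x0 s i) < val (nth x0 s j)) = (i < j).
Proof.
move=> ss lt_i lt_j; have lt_nth := sorted_ltn_nth ltn_val_trans x0 ss.
case: (ltngtP i j) => [lt_ij|lt_ji|->]; last exact: ltnn.
- exact: lt_nth.
- by apply/negbTE; rewrite -leqNgt ltnW // lt_nth.
Qed.

Lemma leq_nth_sorted_ord x0 s i j : sorted ltI s -> i < size s -> j < size s ->
  (val (nth x0 s i) <= val (nth x0 s j)) = (i <= j).
Proof. by move=> ss lt_i lt_j; rewrite leqNgt (ltn_nth_sorted_ord _ ss) // -leqNgt. Qed.

Lemma ltn_index_sorted_ord s x y : sorted ltI s -> x \in s -> y \in s ->
  (index x s < index y s) = (val x < val y).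
Proof.
move=> ss xs ys; rewrite -[in RHS](nth_index x xs) -[in RHS](nth_index x ys).
by rewrite (ltn_nth_sorted_ord _ ss) ?index_mem.
Qed.

Lemma leq_index_sorted_ord s x y : sorted ltI s -> x \in s -> y \in s ->
  (index x s <= index y s) = (val x <= val y).
Proof. by move=> ss xs ys; rewrite leqNgt (ltn_index_sorted_ord ss) // -leqNgt. Qed.

Lemma index_max_sorted_ord s z : sorted ltI s -> z \in s ->
  {in s, forall y, val y <= val z} -> (index z s).+1 = size s.
Proof.
move=> ss zs le_z; apply/eqP; rewrite eqn_leq index_mem zs leqNgt /=.
apply/negP => lt_z; have := le_z _ (mem_nth z lt_z).
have {3}<- := nth_index z zs.
by rewrite (leq_nth_sorted_ord _ ss) ?index_mem // ltnn.
Qed.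

Lemma sorted_ord_enum : sorted ltI (enum 'I_n).
Proof. by have := iota_ltn_sorted 0 n; rewrite -val_enum_ord sorted_map. Qed.

Lemma sorted_ord_map_nth x0 s (p : seq nat) : sorted ltI s -> sorted ltn p ->
  all (gtn (size s)) p -> sorted ltI [seq nth x0 s i | i <- p].
Proof.
move=> ss sp lt_p; rewrite sorted_map; apply: sub_in_sorted lt_p sp.
by move=> i j lt_i lt_j lt_ij; rewrite /= (ltn_nth_sorted_ord _ ss).
Qed.

End StrictlySorted.

Lemma card_ord_interval N lo hi : lo <= hi <= N ->
  #|[set x : 'I_N | lo <= x < hi]| = hi - lo.
Proof.
case/andP=> le_lo le_hi.
have lt_shift (z : 'I_(hi - lo)) : lo + z < N.
  by rewrite -ltn_subRL (leq_trans (ltn_ord z)) // leq_sub2r.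
pose shift z := Ordinal (lt_shift z).
have shift_inj : injective shift by move=> z1 z2 [] /addnI /val_inj.
rewrite -[hi - lo]card_ord -(card_imset _ shift_inj); apply: eq_card => x.
rewrite inE; apply/idP/imsetP => [/andP[le_x lt_x]|[z _ ->]]; last first.
  by rewrite /= leq_addr -ltn_subRL ltn_ord.
have lt_z : x - lo < hi - lo by rewrite ltn_sub2r // (leq_ltn_trans le_x).
by exists (Ordinal lt_z) => //; apply: val_inj; rewrite /= subnKC.
Qed.

Section BoundedMaps.
Variables (k : nat) (beta : 'I_k.+1 -> nat) (n : nat).
Local Notation K := k.+1.
Local Notation b := (bpart beta ord_max).
Local Notation ltI := (fun a b : 'I_n => val a < val b).

Implicit Types (t : K.-tuple 'I_n) (f : {ffun 'I_b -> 'I_n}).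

Definition bounded t f :=
  [forall x : 'I_b, forall j : 'I_K, (x < bpart beta j) ==> (f x <= tnth t j)].

Lemma boundedP t f :
  reflect (forall (x : 'I_b) j, x < bpart beta j -> f x <= tnth t j) (bounded t f).
Proof.
apply: (iffP forallP) => [le_f x j | le_f x]; first exact: (implyP (forallP (le_f x) j)).
by apply/forallP => j; apply/implyP/le_f.
Qed.

Lemma sorted_tnth_leq (t : K.-tuple 'I_n) (i j : 'I_K) :
  sorted ltI t -> i <= j -> tnth t i <= tnth t j.
Proof.
move=> st le_ij; have x0 := tnth t i.
by rewrite !(tnth_nth x0) (leq_nth_sorted_ord _ st) ?size_tuple.
Qed.

Lemma bounded_block (t : K.-tuple 'I_n) (j : 'I_K) x (y : 'I_n) :
  sorted ltI t -> psum beta j <= x < psum beta j.+1 ->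
  [forall l : 'I_K, (x < bpart beta l) ==> (y <= tnth t l)] = (y <= tnth t j).
Proof.
move=> st /andP[le_x lt_x]; apply/forallP/idP => [/(_ j)|le_y l].
  by rewrite bpartE lt_x.
apply/implyP; rewrite bpartE => lt_xl; apply: leq_trans le_y (sorted_tnth_leq st _).
rewrite leqNgt; apply/negP => lt_lj.
by have := leq_trans (leq_psum beta lt_lj) le_x; rewrite leqNgt lt_xl.
Qed.

Lemma card_bounded (t : K.-tuple 'I_n) : sorted ltI t ->
  #|[set f | bounded t f]| = \prod_(j < K) (tnth t j).+1 ^ beta j.
Proof.
move=> st; pose A (x : nat) :=
  [set y : 'I_n | [forall l : 'I_K, (x < bpart beta l) ==> (y <= tnth t l)]].
have -> : #|[set f | bounded t f]| = #|family (fun x : 'I_b => A x)|.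
  apply: eq_card => f; rewrite inE; apply/boundedP/familyP => [f_le x | f_le x l].
    by rewrite inE; apply/forallP => l; apply/implyP/f_le.
  by move: (f_le x); rewrite inE => /forallP/(_ l)/implyP.
rewrite card_family foldrE big_map big_enum /= -(big_mkord xpredT (fun x => #|A x|)).
rewrite bpartE big_nat_psum /=; apply: eq_bigr => j _.
rewrite (eq_big_nat _ _ (F2 := fun=> (tnth t j).+1)) => [|x lim_x].
  by rewrite prod_nat_const_nat psumS inord_val addKn.
rewrite -[(tnth t j).+1]subn0 -(card_ord_interval (N := n)) ?ltn_ord //.
by apply: eq_card => y; rewrite !inE (bounded_block _ st lim_x).
Qed.

End BoundedMaps.

Arguments bounded {k} beta {n} t f.

Section AdmissibleMaps.
Variables (k : nat) (beta : 'I_k.+1 -> nat) (n : nat).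
Local Notation K := k.+1.
Local Notation b := (bpart beta ord_max).
Local Notation ltI := (fun a b : 'I_n.+1 => val a < val b).
Implicit Types (I : 'I_K -> nat) (s : seq 'I_n.+1) (f : {ffun 'I_b -> 'I_n.+1}).

Definition apos_tuple I s : K.-tuple 'I_n.+1 := [tuple nth ord0 s (apos I j) | j < K].

Definition admissible I s f :=
  [forall y, (y \in s) == (y \in codom f) || (y \in apos_tuple I s)] &&
  bounded beta (apos_tuple I s) f.

Lemma admissibleP I s f :
  reflect ((forall y, (y \in s) = (y \in codom f) || (y \in apos_tuple I s)) /\
           (forall (x : 'I_b) j, x < bpart beta j -> f x <= tnth (apos_tuple I s) j))
          (admissible I s f).
Proof.
apply: (iffP andP) => -[mem_s /boundedP f_le]; split=> //.
  by move=> y; apply/eqP; move/forallP: mem_s; apply.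
by apply/forallP => y; rewrite mem_s.
Qed.

Lemma tnth_apos_tuple I s j : tnth (apos_tuple I s) j = nth ord0 s (apos I j).
Proof. exact: tnth_mktuple. Qed.

Lemma eq_apos_tuple I1 I2 s : apos I1 =1 apos I2 -> apos_tuple I1 s = apos_tuple I2 s.
Proof. by move=> eq_apos; apply: eq_from_tnth => j; rewrite !tnth_apos_tuple eq_apos. Qed.

Lemma sorted_apos_tuple I s : sorted ltI s -> size s = (apos I ord_max).+1 ->
  sorted ltI (apos_tuple I s).
Proof.
move=> ss size_s.
have -> : apos_tuple I s = [seq nth ord0 s i | i <- map (apos I) (enum 'I_K)] :> seq _.
  by rewrite -map_comp.
apply: sorted_ord_map_nth => //.
  by rewrite sorted_map; exact: sub_sorted (@apos_ltn _ I) _ (sorted_ord_enum K).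
by apply/allP => _ /mapP[j _ ->]; rewrite /= size_s ltnS leq_apos_max.
Qed.

Lemma cbI_card I s : sorted ltI s -> size s = (apos I ord_max).+1 ->
  cbI beta I = #|[set f | admissible I s f]|.
Proof.
move=> ss size_s; have us := sorted_ord_uniq ss.
have lt_N (p : 'I_(Npart I ord_max)) : p < size s by rewrite size_s -Npart_apos.
have lt_apos j : apos I j < size s by rewrite size_s ltnS leq_apos_max.
have lt_index y : y \in s -> index y s < Npart I ord_max.
  by rewrite Npart_apos -size_s index_mem.
pose comp (g : {ffun 'I_b -> 'I_(Npart I ord_max)}) := [ffun x => nth ord0 s (g x)].
have comp_inj : injective comp.
  move=> g1 g2 /ffunP eq_g; apply/ffunP => x; apply/val_inj/eqP.
  by have := eq_g x; rewrite !ffunE => /eqP; rewrite nth_uniq.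
rewrite /cbI -(card_imset _ comp_inj); apply: eq_card => f; rewrite inE.
apply/imsetP/admissibleP => [[g] | [mem_s f_le]].
- rewrite inE => /andP[/forallP g_le /forallP g_cover] ->; split=> [y|].
    apply/idP/orP => [ys | [/codomP[x ->] | /tnthP[j ->]]]; last 2 first.
    + by rewrite ffunE mem_nth.
    + by rewrite tnth_apos_tuple mem_nth.
    case/orP: (g_cover (Ordinal (lt_index y ys))) => [/existsP[x /eqP gx] | /existsP[j]].
      by left; apply/codomP; exists x; rewrite ffunE gx nth_index.
    rewrite [Npart I j]Npart_apos eqSS => /eqP eq_y; right; apply/tnthP; exists j.
    by rewrite tnth_apos_tuple -eq_y nth_index.
  move=> x j /(implyP (forallP (g_le x) j)).
  by rewrite [Npart I j]Npart_apos ltnS ffunE tnth_apos_tuple (leq_nth_sorted_ord _ ss).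
- have fs x : f x \in s by rewrite mem_s codom_f.
  exists [ffun x => Ordinal (lt_index _ (fs x))]; last first.
    by apply/ffunP => x; rewrite !ffunE nth_index.
  rewrite inE; apply/andP; split.
    apply/forallP => x; apply/forallP => j; apply/implyP => /f_le.
    rewrite ffunE [Npart I j]Npart_apos ltnS tnth_apos_tuple /=.
    rewrite -{2}(index_uniq ord0 (lt_apos j) us).
    by rewrite (leq_index_sorted_ord ss) ?fs ?mem_nth.
  apply/forallP => p; apply/orP.
  have /orP[/codomP[x fx] | /tnthP[j]] :
      (nth ord0 s p \in codom f) || (nth ord0 s p \in apos_tuple I s).
    by rewrite -mem_s mem_nth.
  - left; apply/existsP; exists x; rewrite ffunE; apply/eqP/val_inj => /=.
    by rewrite -fx index_uniq.
  rewrite tnth_apos_tuple => /eqP; rewrite nth_uniq // => /eqP eq_p.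
  by right; apply/existsP; exists j; rewrite [Npart I j]Npart_apos eqSS; apply/eqP.
Qed.

Lemma admissible_bound I s f : sorted ltI s -> size s = (apos I ord_max).+1 ->
  admissible I s f -> forall j, I j <= bsuffix beta j.
Proof.
move=> ss size_s /admissibleP[mem_s f_le] j; have us := sorted_ord_uniq ss.
have lt_apos l : apos I l < size s by rewrite size_s ltnS leq_apos_max.
have fs x : f x \in s by rewrite mem_s codom_f.
have lt_pos x : index (f x) s < size s by rewrite index_mem.
pose pos x : 'I_(size s) := Ordinal (lt_pos x).
set lo := psum (fun l => (I l).+1) j.
pose P := [set p : 'I_(size s) | lo <= p < apos I j].
pose X := [set x : 'I_b | psum beta j <= x < b].
have card_P : #|P| = I j by rewrite card_ord_interval ?addKn // leq_addr ltnW.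
have card_X : #|X| = bsuffix beta j.
  rewrite card_ord_interval ?bsuffixE ?bpartE //.
  by rewrite leqnn andbT leq_psum // ltnW.
suff sub : P \subset pos @: X.
  by rewrite -card_P -card_X; apply: leq_trans (subset_leq_card sub) (leq_imset_card _ _).
apply/subsetP => p; rewrite inE => /andP[le_lo lt_p].
have /orP[/codomP[x fx] | /tnthP[l]] :
    (nth ord0 s p \in codom f) || (nth ord0 s p \in apos_tuple I s).
  by rewrite -mem_s mem_nth.
- apply/imsetP; exists x; last by apply: val_inj; rewrite /= -fx index_uniq.
  rewrite inE ltn_ord andbT leqNgt; apply/negP => lt_x.
  have j_gt0 : 0 < j by rewrite lt0n; apply: contraTneq lt_x => ->; rewrite psum0.
  pose l := Ordinal (leq_ltn_trans (leq_pred j) (ltn_ord j)).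
  have le_fx : f x <= tnth (apos_tuple I s) l.
    by apply: f_le; rewrite [bpart beta l]bpartE /= prednK.
  have : lo <= apos I l.
    rewrite (leq_trans le_lo) // -[X in X <= _](index_uniq ord0 (ltn_ord p) us) fx.
    rewrite -[apos I l](index_uniq ord0 (lt_apos l) us).
    rewrite (leq_index_sorted_ord ss) ?fs ?mem_nth //.
    by rewrite -tnth_apos_tuple.
  by rewrite /lo leq_psum_apos leqNgt /= ltn_predL j_gt0.
- rewrite tnth_apos_tuple => /eqP; rewrite nth_uniq // => /eqP eq_p.
  move: le_lo lt_p; rewrite eq_p /lo leq_psum_apos => le_jl.
  by rewrite ltnNge leq_apos le_jl.
Qed.

End AdmissibleMaps.

Arguments admissible {k} beta {n} I s f.

Section Realizations.
Variables (k : nat) (alpha beta : 'I_k.+1 -> nat) (n : nat).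
Local Notation K := k.+1.
Local Notation b := (bpart beta ord_max).
Local Notation ltI := (fun a b : 'I_n.+1 => val a < val b).
Local Notation natf I := (fun j => nat_of_ord (I j)).

Definition compos_tuple (I : {ffun 'I_K -> 'I_(btotal beta).+1}) : finType :=
  (size (compos alpha (natf I))).-tuple 'I_n.+1.

Definition compos_index := {I : {ffun 'I_K -> 'I_(btotal beta).+1} & compos_tuple I}.

Definition realizes (f : {ffun 'I_b -> 'I_n.+1}) (u : compos_index) :=
  [&& [forall j, tag u j <= bsuffix beta j], sorted ltI (tagged u) &
      admissible beta (natf (tag u)) (tagged u) f].

Definition collapse (u : compos_index) := apos_tuple (natf (tag u)) (tagged u).

Lemma size_tagged (u : compos_index) : size (tagged u) = (apos (natf (tag u)) ord_max).+1.
Proof. by rewrite size_tuple size_compos. Qed.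

Lemma realizes_collapse f u :
  realizes f u -> sorted ltI (collapse u) && bounded beta (collapse u) f.
Proof.
case/and3P=> _ ss /admissibleP[_ /boundedP f_le].
by rewrite sorted_apos_tuple ?size_tagged.
Qed.

Lemma collapse_inj f : {in realizes f &, injective collapse}.
Proof.
move=> [I1 s1] [I2 s2]; rewrite !unfold_in /= => /and3P[_ ss1 /admissibleP[mem1 _]].
case/and3P=> _ ss2 /admissibleP[mem2 _].
rewrite /collapse /= => eq_t.
have eq_s : s1 = s2 :> seq _.
  apply: (irr_sorted_eq (@ltn_val_trans _) (@ltn_val_irr _) ss1 ss2) => y.
  by rewrite mem1 mem2 eq_t.
have lt_size (I : {ffun 'I_K -> 'I_(btotal beta).+1}) (t : compos_tuple I) j :
    apos (natf I) j < size t by rewrite size_tuple size_compos ltnS leq_apos_max.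
have eq_apos : apos (natf I1) =1 apos (natf I2).
  move=> j; have := congr1 (fun t => tnth t j) eq_t; rewrite !tnth_apos_tuple -eq_s.
  move/eqP; rewrite nth_uniq ?(sorted_ord_uniq ss1) ?lt_size //; first by move/eqP.
  by rewrite eq_s lt_size.
have eq_I : I1 = I2 by apply/ffunP => j; apply/val_inj/(eq_from_apos eq_apos).
by subst I2; congr Tagged; apply: val_inj.
Qed.

Lemma collapse_surj f (t : K.-tuple 'I_n.+1) : sorted ltI t -> bounded beta t f ->
  exists2 u, realizes f u & t = collapse u.
Proof.
move=> st /boundedP t_le.
pose s := [seq y <- enum 'I_n.+1 | (y \in codom f) || (y \in t)].
have ss : sorted ltI s := sorted_filter (@ltn_val_trans _) _ (sorted_ord_enum _).
have mem_s y : (y \in s) = (y \in codom f) || (y \in t).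
  by rewrite mem_filter mem_enum andbT.
have ts j : tnth t j \in s by rewrite mem_s mem_tnth orbT.
pose Q j := index (tnth t j) s.
have Q_ltn : {homo Q : i j / i < j}.
  move=> i j lt_ij; rewrite /Q (ltn_index_sorted_ord ss) ?ts //.
  by rewrite !(tnth_nth ord0) (ltn_nth_sorted_ord _ st) ?size_tuple.
have t_apos j : tnth t j = nth ord0 s (apos (gaps Q) j) by rewrite apos_gaps // nth_index.
have size_s : size s = (apos (gaps Q) ord_max).+1.
  rewrite apos_gaps // index_max_sorted_ord // => y; rewrite mem_s.
  case/orP=> [/codomP[x ->] | /tnthP[j ->]]; last by rewrite sorted_tnth_leq // -ltnS.
  exact: t_le.
have t_eq : t = apos_tuple (gaps Q) s.
  by apply: eq_from_tnth => j; rewrite tnth_apos_tuple t_apos.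
have adm : admissible beta (gaps Q) s f by apply/admissibleP; rewrite -t_eq.
have bound := admissible_bound ss size_s adm.
pose I : {ffun 'I_K -> 'I_(btotal beta).+1} := [ffun j => inord (gaps Q j)].
have eq_I : natf I =1 gaps Q.
  by move=> j; rewrite ffunE inordK // ltnS (leq_trans (bound j)) ?bsuffix_le_btotal.
have eq_t := eq_apos_tuple s (eq_apos eq_I).
have size_sI : size s == size (compos alpha (natf I)).
  by rewrite size_compos (eq_apos eq_I) size_s.
exists (Tagged compos_tuple (Tuple size_sI)); last by rewrite /collapse /= eq_t.
apply/and3P; split=> //=; last by rewrite /admissible eq_t.
by apply/forallP => j; rewrite eq_I bound.
Qed.

Lemma big_realizes (R : Type) (idx : R) (op : Monoid.com_law idx)
    (f : {ffun 'I_b -> 'I_n.+1}) (F : K.-tuple 'I_n.+1 -> R) :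
  \big[op/idx]_(t : K.-tuple 'I_n.+1 | sorted ltI t && bounded beta t f) F t =
  \big[op/idx]_(u | realizes f u) F (collapse u).
Proof.
rewrite -[RHS](big_imset _ (@collapse_inj f)); apply: eq_bigl => t.
apply/idP/imsetP => [/andP[st t_le]|[u fu ->]]; last exact: realizes_collapse.
by have [u fu ->] := collapse_surj st t_le; exists u.
Qed.

End Realizations.

Lemma big_ord_inj_support (R : Type) (idx : R) (op : Monoid.com_law idx)
    m K (G : nat -> R) (e : 'I_K -> nat) :
  injective e -> (forall j, e j < m) ->
  (forall p, p < m -> (forall j, p != e j) -> G p = idx) ->
  \big[op/idx]_(p < m) G p = \big[op/idx]_(j < K) G (e j).
Proof.
move=> e_inj lt_e G_idx; rewrite -(big_mkord xpredT) (bigID (mem (codom e))) /=.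
rewrite [X in op _ X]big1_seq ?Monoid.mulm1; last first.
  move=> p /andP[p_e]; rewrite mem_index_iota => /= lt_p; apply: G_idx => // j.
  by apply: contra p_e => /eqP ->; apply: codom_f.
rewrite -big_filter (perm_big (codom e)) ?big_map ?big_enum //.
apply: uniq_perm; first by rewrite filter_uniq ?iota_uniq.
  by rewrite map_inj_uniq ?enum_uniq.
move=> p; rewrite mem_filter mem_index_iota /= andb_idr // => /codomP[j ->].
exact: lt_e.
Qed.

Section Expansions.
Variables (k : nat) (alpha beta : 'I_k.+1 -> nat) (n : nat).
Local Notation K := k.+1.
Local Notation b := (bpart beta ord_max).
Local Notation ltI := (fun a b : 'I_n.+1 => val a < val b).
Local Notation natf I := (fun j => nat_of_ord (I j)).
Local Open Scope ring_scope.

Definition xmono (t : K.-tuple 'I_n.+1) : {mpoly int[n.+1]} :=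
  \prod_(j < K) 'X_(tnth t j) ^+ alpha j.

Lemma Mq_compos (I : 'I_K -> nat) :
  Mq n.+1 (compos alpha I) =
  \sum_(s : (size (compos alpha I)).-tuple 'I_n.+1 | sorted ltI s) xmono (apos_tuple I s).
Proof.
apply: eq_bigr => s _; rewrite /xmono.
under eq_bigr do rewrite (tnth_nth ord0).
pose G p : {mpoly int[n.+1]} := 'X_(nth ord0 s p) ^+ nth 0%N (compos alpha I) p.
rewrite (big_ord_inj_support (G := G) _ (@apos_inj _ I)) => [|j|p lt_p notin].
- by apply: eq_bigr => j _; rewrite /G nth_compos_apos tnth_apos_tuple.
- by rewrite size_compos ltnS leq_apos_max.
- by rewrite /G nth_compos_gap ?expr0.
Qed.

Lemma Mhat_expand :
  Mhat n.+1 alpha beta =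
  \sum_(f : {ffun 'I_b -> 'I_n.+1})
     \sum_(t : K.-tuple 'I_n.+1 | sorted ltI t && bounded beta t f) xmono t.
Proof.
rewrite -(exchange_big_dep xpredT) //=; apply: eq_bigr => t st.
rewrite big_split /= -natr_prod -card_bounded // mulr_natl -sumr_const.
by apply: eq_bigl => f; rewrite inE.
Qed.

Lemma sum_cbI_Mq_expand :
  \sum_(I : {ffun 'I_K -> 'I_(btotal beta).+1} | [forall j, I j <= bsuffix beta j]%N)
     (cbI beta (natf I))%:R * Mq n.+1 (compos alpha (natf I)) =
  \sum_(f : {ffun 'I_b -> 'I_n.+1})
     \sum_(u : compos_index alpha beta n | realizes f u) xmono (collapse u).
Proof.
transitivity (\sum_(I : {ffun 'I_K -> 'I_(btotal beta).+1} |
                  [forall j, I j <= bsuffix beta j]%N)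
   \sum_(s : compos_tuple alpha n I | sorted ltI s)
   \sum_(f | admissible beta (natf I) s f) xmono (apos_tuple (natf I) s)).
  apply: eq_bigr => I _; rewrite Mq_compos mulr_sumr; apply: eq_bigr => s ss.
  rewrite (cbI_card _ ss) ?size_tuple ?size_compos // mulr_natl -sumr_const.
  by apply: eq_bigl => f; rewrite inE.
rewrite (sig_big_dep (J := compos_tuple alpha n)) (exchange_big_dep xpredT) //=.
by apply: eq_bigr => f _; apply: eq_bigl => u; rewrite -andbA.
Qed.

End Expansions.

Lemma big_tuple_ord0 (R : Type) (idx : R) (op : R -> R -> R) m
    (P : pred (m.-tuple 'I_0)) F :
  0 < m -> \big[op/idx]_(t | P t) F t = idx.
Proof. by move=> m_gt0; rewrite big_pred0 // => t; case: (tnth t (Ordinal m_gt0)). Qed.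

Unset Implicit Arguments.
Local Open Scope ring_scope.

Theorem proposition5p4 (k : nat) (alpha beta : 'I_k.+1 -> nat) :
  (0 < alpha ord_max)%N ->
  forall n : nat,
    Mhat n alpha beta =
    \sum_(I : {ffun 'I_k.+1 -> 'I_(btotal beta).+1} |
            [forall j : 'I_k.+1, (nat_of_ord (I j) <= bsuffix beta j)%N])
      (cbI beta (fun j => nat_of_ord (I j)))%:R
        * Mq n (compos alpha (fun j => nat_of_ord (I j))).
Proof.
move=> _ [|n].
  rewrite [LHS]big_tuple_ord0 // big1 // => I _.
  by rewrite [Mq _ _]big_tuple_ord0 ?mulr0 // size_compos.
rewrite Mhat_expand sum_cbI_Mq_expand; apply: eq_bigr => f _.
exact: big_realizes.
Qed.
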